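(* If $\Phi=(\varphi_n)_{n\in\mathbb{N}}$ is a depth-bounded fuzzy simulation between fuzzy automata $\mathcal{A}$ and $\mathcal{A}'$, then for every $n\in\mathbb{N}$ and every $\alpha\in\mathcal{F}^{n}_{\to}$ we have $\varphi_n^{-1}\circ\alpha^{\mathcal{A}}\le\alpha^{\mathcal{A}'}$; in particular $\varphi_n(x,x')\le\bigwedge_{\alpha\in\mathcal{F}^n_{\to}}(\alpha^{\mathcal{A}}(x)\Rightarrow\alpha^{\mathcal{A}'}(x'))$ for all $(x,x')\in A\times A'$.
   Context: $\mathcal{L}=\langle L,\le,\otimes,\Rightarrow,0,1\rangle$ is a complete residuated lattice: $\langle L,\le,0,1\rangle$ is a complete lattice with least element $0$ and greatest element $1$, $\langle L,\otimes,1\rangle$ is a commutative monoid, and $x\otimes y\le z$ iff $x\le (y\Rightarrow z)$. Fuzzy sets/relations are maps into $L$ ordered pointwise; $\varphi^{-1}(b,a)=\varphi(a,b)$; $(\varphi\circ\psi)(a,c)=\bigvee_b\varphi(a,b)\otimes\psi(b,c)$, $(\varphi\circ g)(a)=\bigvee_b\varphi(a,b)\otimes g(b)$. A fuzzy automaton over $\Sigma$ is $\mathcal{A}=\langle A,\delta^{\mathcal{A}},\sigma^{\mathcal{A}},\tau^{\mathcal{A}}\rangle$ with $A$ nonempty, $\delta^{\mathcal{A}}:A\times\Sigma\times A\to L$, $\sigma^{\mathcal{A}},\tau^{\mathcal{A}}:A\to L$; $\delta^{\mathcal{A}}_s(x,y)=\delta^{\mathcal{A}}(x,s,y)$; similarly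 $\mathcal{A}'$ with states $A'$. The sets $\mathcal{F}^n_{\to}$ ($n\in\mathbb{N}$) are the smallest sets of formulas such that: $\tau\in\mathcal{F}^n_{\to}$; if $s\in\Sigma$ and $\alpha\in\mathcal{F}^n_{\to}$ then $(s\circ\alpha)\in\mathcal{F}^{n+1}_{\to}$; if $a\in L$ and $\alpha\in\mathcal{F}^n_{\to}$ then $(a\to\alpha)\in\mathcal{F}^n_{\to}$; if $\alpha,\beta\in\mathcal{F}^n_{\to}$ then $(\alpha\wedge\beta)\in\mathcal{F}^n_{\to}$. Semantics in $\mathcal{A}$ (a fuzzy set $\alpha^{\mathcal{A}}$ on $A$): $\tau^{\mathcal{A}}$ is the terminal fuzzy set; $(s\circ\alpha)^{\mathcal{A}}=\delta^{\mathcal{A}}_s\circ\alpha^{\mathcal{A}}$; $(a\to\alpha)^{\mathcal{A}}(x)=a\Rightarrow\alpha^{\mathcal{A}}(x)$; $(\alpha\wedge\beta)^{\mathcal{A}}(x)=\alpha^{\mathcal{A}}(x)\wedge\beta^{\mathcal{A}}(x)$. A depth-bounded fuzzy simulation between $\mathcal{A}$ and $\mathcal{A}'$ is a sequence $(\varphi_n)_{n\in\mathbb{N}}$ of fuzzy relations $A\times A'\to L$ with $\varphi_n\le\varphi_{n-1}$ ($n\ge1$), $\varphi_0^{-1}\circ\tau^{\mathcal{A}}\le\tau^{\mathcal{A}'}$, and $\varphi_n^{-1}\circ\delta^{\mathcal{A}}_s\le\delta^{\mathcal{A}'}_s\circ\varphi_{n-1}^{-1}$ for all $s\in\Sigma$,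 $n\ge1$. *)

Set Implicit Arguments.

Record CRL : Type := {
  carrier :> Type;
  le : carrier -> carrier -> Prop;
  bot : carrier;
  top : carrier;
  sup : (carrier -> Prop) -> carrier;
  inf : (carrier -> Prop) -> carrier;
  mul : carrier -> carrier -> carrier;
  res : carrier -> carrier -> carrier;
  le_refl : forall x, le x x;
  le_trans : forall x y z, le x y -> le y z -> le x z;
  le_antisym : forall x y, le x y -> le y x -> x = y;
  bot_le : forall x, le bot x;
  le_top : forall x, le x top;
  sup_ub : forall (S : carrier -> Prop) x, S x -> le x (sup S);
  sup_least : forall (S : carrier -> Prop) y, (forall x, S x -> le x y) -> le (sup S) y;
  inf_lb : forall (S : carrier -> Prop) x, S x -> le (inf S) x;
  inf_greatest : forall (S : carrier -> Prop) y, (forall x, S x -> le y x) -> le y (inf S);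
  mulA : forall x y z, mul x (mul y z) = mul (mul x y) z;
  mulC : forall x y, mul x y = mul y x;
  mul1x : forall x, mul top x = x;
  residuation : forall x y z, le (mul x y) z <-> le x (res y z)
}.

Arguments le {L} : rename.
Arguments sup {L} : rename.
Arguments inf {L} : rename.
Arguments mul {L} : rename.
Arguments res {L} : rename.


Section Fuzzy.
Variable L : CRL.

Definition meet (x y : L) : L := inf (fun z => z = x \/ z = y).

Definition fset_le {A : Type} (f g : A -> L) : Prop := forall a, le (f a) (g a).

Definition finv {A B : Type} (phi : A -> B -> L) : B -> A -> L := fun b a => phi a b.

Definition rcomp {A B C : Type} (phi : A -> B -> L) (psi : B -> C -> L) : A -> C -> L :=
  fun a c => sup (fun v => exists b, v = mul (phi a b) (psi b c)).

Definition rsetcomp {A B : Type} (phi : A -> B -> L) (g : B -> L) : A -> L :=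
  fun a => sup (fun v => exists b, v = mul (phi a b) (g b)).

Record fautomaton (Sigma : Type) : Type := {
  st : Type;
  st_inhabited : inhabited st;
  delta : st -> Sigma -> st -> L;
  sigma0 : st -> L;
  tau0 : st -> L
}.

Definition delta_s {Sigma : Type} (M : fautomaton Sigma) (s : Sigma) : st M -> st M -> L :=
  fun x y => delta M x s y.

Inductive Fto (Sigma : Type) : nat -> Type :=
  | Ftau : forall n, Fto Sigma n
  | Fdia : forall n, Sigma -> Fto Sigma n -> Fto Sigma (S n)
  | Fimp : forall n, L -> Fto Sigma n -> Fto Sigma n
  | Fand : forall n, Fto Sigma n -> Fto Sigma n -> Fto Sigma n.

Fixpoint sem {Sigma : Type} (M : fautomaton Sigma) {n : nat} (f : Fto Sigma n)
  : st M -> L :=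
  match f with
  | Ftau _ _ => tau0 M
  | Fdia s g => rsetcomp (delta_s M s) (sem M g)
  | Fimp a g => fun x => res a (sem M g x)
  | Fand g h => fun x => meet (sem M g x) (sem M h x)
  end.

Definition db_simulation {Sigma : Type} (M M' : fautomaton Sigma)
  (phi : nat -> st M -> st M' -> L) : Prop :=
  (forall n, 1 <= n -> forall x x', le (phi n x x') (phi (n - 1) x x')) /\
  fset_le (rsetcomp (finv (phi 0)) (tau0 M)) (tau0 M') /\
  (forall (s : Sigma) n, 1 <= n ->
     forall x' y, le (rcomp (finv (phi n)) (delta_s M s) x' y)
                     (rcomp (delta_s M' s) (finv (phi (n - 1))) x' y)).

End Fuzzy.
Arguments db_simulation {L Sigma} M M' phi.
Arguments meet {L}.
Arguments fset_le {L A}.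
Arguments finv {L A B}.
Arguments rcomp {L A B C}.
Arguments rsetcomp {L A B}.
Arguments sem {L Sigma} M {n}.
Arguments delta_s {L Sigma} M s.

From Stdlib Require Import Lia.

(* The argument isolates one notion: a fuzzy relation psi between the states
   of A and A' "transfers" a fuzzy set f on A to a fuzzy set g on A' when
   psi(x,x') (x) f(x) <= g(x') for all x, x'.  By residuation and the
   definition of suprema this is exactly psi^{-1} o f <= g, and it also gives
   psi(x,x') <= f(x) => g(x').

   For a depth-bounded simulation (phi_n) an induction on the formula
   alpha of F^n_-> then shows that phi_n transfers alpha^A to alpha^A';
   both parts of the theorem are reformulations of this fact. *)

Section ResiduatedLattice.
Variable L : CRL.

Lemma mul_mono_l (a b c : L) : le a b -> le (mul a c) (mul b c).
Proof.
  intro Hab. apply residuation. apply le_trans with b; [exact Hab|].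
  apply residuation. apply le_refl.
Qed.

Lemma mul_mono_r (a b c : L) : le a b -> le (mul c a) (mul c b).
Proof. intro Hab. rewrite (mulC L c a), (mulC L c b). now apply mul_mono_l. Qed.

(* (sup S) (x) b is bounded by T as soon as every v (x) b with v in S is:
   multiplication distributes over suprema. *)
Lemma sup_mul_l (S : L -> Prop) (b T : L) :
  (forall v, S v -> le (mul v b) T) -> le (mul (sup S) b) T.
Proof.
  intro HS. apply residuation. apply sup_least. intros v Hv.
  apply residuation. auto.
Qed.

Lemma sup_mul_r (S : L -> Prop) (b T : L) :
  (forall v, S v -> le (mul b v) T) -> le (mul b (sup S)) T.
Proof.
  intro HS. rewrite mulC. apply sup_mul_l. intros v Hv. rewrite mulC. auto.
Qed.

Lemma mul_res_le (a b : L) : le (mul a (res a b)) b.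
Proof. rewrite mulC. apply residuation. apply le_refl. Qed.

Lemma meet_le_l (x y : L) : le (meet x y) x.
Proof. apply inf_lb. now left. Qed.

Lemma meet_le_r (x y : L) : le (meet x y) y.
Proof. apply inf_lb. now right. Qed.

Lemma meet_greatest (x y z : L) : le z x -> le z y -> le z (meet x y).
Proof. intros Hx Hy. apply inf_greatest. now intros w [-> | ->]. Qed.

End ResiduatedLattice.

Arguments mul_mono_l {L}.
Arguments mul_mono_r {L}.
Arguments sup_mul_l {L}.
Arguments sup_mul_r {L}.
Arguments mul_res_le {L}.
Arguments meet_le_l {L}.
Arguments meet_le_r {L}.
Arguments meet_greatest {L}.

Section Transfer.
Variable L : CRL.

Definition transfers {A A' : Type} (psi : A -> A' -> L) (f : A -> L) (g : A' -> L)
  : Prop :=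
  forall x x', le (mul (psi x x') (f x)) (g x').

Lemma transfers_iff {A A' : Type} (psi : A -> A' -> L) f g :
  transfers psi f g <-> fset_le (rsetcomp (finv psi) f) g.
Proof.
  split.
  - intros Hpsi x'. apply sup_least. intros v [x ->]. apply Hpsi.
  - intros Hle x x'. apply le_trans with (rsetcomp (finv psi) f x'); [|apply Hle].
    apply sup_ub. now exists x.
Qed.

Lemma transfers_le_res {A A' : Type} (psi : A -> A' -> L) f g x x' :
  transfers psi f g -> le (psi x x') (res (f x) (g x')).
Proof. intro Hpsi. apply residuation, Hpsi. Qed.

Lemma transfers_antitone {A A' : Type} (psi chi : A -> A' -> L) f g :
  (forall x x', le (psi x x') (chi x x')) -> transfers chi f g -> transfers psi f g.
Proof.
  intros Hle Hchi x x'. apply le_trans with (mul (chi x x') (f x)); [|apply Hchi].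
  apply mul_mono_l, Hle.
Qed.

Lemma transfers_res {A A' : Type} (psi : A -> A' -> L) (a : L) f g :
  transfers psi f g ->
  transfers psi (fun x => res a (f x)) (fun x' => res a (g x')).
Proof.
  intros Hpsi x x'. apply (proj1 (residuation _ _ _ _)).
  apply le_trans with (mul (psi x x') (f x)); [|apply Hpsi].
  rewrite <- mulA. apply mul_mono_r. rewrite mulC. apply mul_res_le.
Qed.

Lemma transfers_meet {A A' : Type} (psi : A -> A' -> L) f1 g1 f2 g2 :
  transfers psi f1 g1 -> transfers psi f2 g2 ->
  transfers psi (fun x => meet (f1 x) (f2 x)) (fun x' => meet (g1 x') (g2 x')).
Proof.
  intros H1 H2 x x'. apply meet_greatest.
  - apply le_trans with (mul (psi x x') (f1 x)); [|apply H1].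
    apply mul_mono_r, meet_le_l.
  - apply le_trans with (mul (psi x x') (f2 x)); [|apply H2].
    apply mul_mono_r, meet_le_r.
Qed.

Lemma transfers_rsetcomp {A A' : Type} (psi chi : A -> A' -> L)
  (d : A -> A -> L) (d' : A' -> A' -> L) f g :
  (forall x' y, le (rcomp (finv psi) d x' y) (rcomp d' (finv chi) x' y)) ->
  transfers chi f g -> transfers psi (rsetcomp d f) (rsetcomp d' g).
Proof.
  intros Hstep Hchi x x'. apply sup_mul_r. intros v [y ->].
  rewrite mulA.
  assert (Hpath : le (mul (psi x x') (d x y)) (rcomp d' (finv chi) x' y)).
  { apply le_trans with (rcomp (finv psi) d x' y); [|apply Hstep].
    apply sup_ub. now exists x. }
  apply le_trans with (mul (rcomp d' (finv chi) x' y) (f y)); [now apply mul_mono_l|].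
  apply sup_mul_l. intros w [y' ->].
  rewrite <- mulA.
  apply le_trans with (mul (d' x' y') (g y')); [apply mul_mono_r, Hchi|].
  apply sup_ub. now exists y'.
Qed.

End Transfer.

Arguments transfers {L A A'}.
Arguments transfers_iff {L A A'}.
Arguments transfers_le_res {L A A'}.
Arguments transfers_antitone {L A A'}.
Arguments transfers_res {L A A'}.
Arguments transfers_meet {L A A'}.
Arguments transfers_rsetcomp {L A A'}.

Section Simulation.
Variables (L : CRL) (Sigma : Type) (M M' : fautomaton L Sigma).
Variable phi : nat -> st M -> st M' -> L.
Hypothesis Hsim : db_simulation M M' phi.

Lemma db_simulation_le_0 n x x' : le (phi n x x') (phi 0 x x').
Proof.
  destruct Hsim as [Hmon _].
  induction n as [|n IH]; [apply le_refl|].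
  apply le_trans with (phi n x x'); [|exact IH].
  replace n with (S n - 1) at 2 by lia. apply Hmon. lia.
Qed.

Lemma db_simulation_step (s : Sigma) n x' y :
  le (rcomp (finv (phi (S n))) (delta_s M s) x' y)
     (rcomp (delta_s M' s) (finv (phi n)) x' y).
Proof.
  destruct Hsim as [_ [_ Hdel]].
  replace n with (S n - 1) at 2 by lia. apply Hdel. lia.
Qed.

Lemma db_simulation_transfers n (alpha : Fto L Sigma n) :
  transfers (phi n) (sem M alpha) (sem M' alpha).
Proof.
  induction alpha as [n | n s alpha IH | n a alpha IH | n alpha1 IH1 alpha2 IH2];
    simpl.
  - apply transfers_antitone with (phi 0); [apply db_simulation_le_0|].
    apply transfers_iff. apply Hsim.
  - apply transfers_rsetcomp with (phi n); [apply db_simulation_step | exact IH].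
  - now apply transfers_res.
  - now apply transfers_meet.
Qed.

End Simulation.

Theorem mainTheorem8 (L : CRL) (Sigma : Type) (M M' : fautomaton L Sigma)
  (phi : nat -> st M -> st M' -> L) :
  db_simulation M M' phi ->
  (forall (n : nat) (alpha : Fto L Sigma n),
     fset_le (rsetcomp (finv (phi n)) (sem M alpha)) (sem M' alpha)) /\
  (forall (n : nat) (x : st M) (x' : st M'),
     le (phi n x x')
        (inf (fun v => exists alpha : Fto L Sigma n,
                 v = res (sem M alpha x) (sem M' alpha x')))).
Proof.
  intro Hsim. split.
  - intros n alpha. apply transfers_iff. now apply db_simulation_transfers.
  - intros n x x'. apply inf_greatest. intros v [alpha ->].
    apply transfers_le_res. now apply db_simulation_transfers.
Qed.
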